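(* Let $\Omega$ be a finite set and $f:2^{\Omega}\to\mathbb{R}$ increasing with $f(\emptyset)=0$, and let $\tilde\gamma\in\Gamma(f)$. Then for every $\mathcal{S}\subseteq\Omega$, $f(\mathcal{S})\ge-|\mathcal{S}|D[f]+\sum_{s\in\mathcal{S}}\tilde\gamma_s$.
   Context: For a permutation $\pi$ of $\Omega$, $\mathcal{S}^\pi_0=\emptyset$, $\mathcal{S}^\pi_k=\{\pi_1,\dots,\pi_k\}$; $\Gamma(f)=\{\gamma\in\mathbb{R}^{|\Omega|}:\exists$ permutation $\pi$ with $\gamma_{\pi_i}=f(\mathcal{S}^\pi_i)-f(\mathcal{S}^\pi_{i-1})$ for all $i\}$. $D[f]=\max\{f(\mathcal{A}\cup\mathcal{B}\cup\{s\})-f(\mathcal{A}\cup\mathcal{B})-f(\mathcal{A}\cup\{s\})+f(\mathcal{A}):\mathcal{A},\mathcal{B}\subseteq\Omega,s\in\Omega,|\mathcal{A}|\le|\Omega|-1\}$. *)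

From HB Require Import structures.
From mathcomp Require Import all_boot all_order all_algebra.
Set Implicit Arguments. Unset Strict Implicit. Unset Printing Implicit Defensive.
Import Order.TTheory GRing.Theory Num.Theory.
Local Open Scope ring_scope.

(* A permutation pi of Omega is a bijection 'I_#|Omega| -> Omega; pi i is
   the (i+1)-th element pi_{i+1}.  prefix pi k = S^pi_k = {pi_1,...,pi_k}. *)
Definition prefix (Omega : finType) (pi : 'I_#|Omega| -> Omega) (k : nat)
  : {set Omega} := [set pi i | i : 'I_#|Omega| & (i < k)%N].

Definition in_Gamma (R : realDomainType) (Omega : finType)
  (f : {set Omega} -> R) (gamma : Omega -> R) : Prop :=
  exists pi : 'I_#|Omega| -> Omega, bijective pi /\
    forall i : 'I_#|Omega|,
      gamma (pi i) = f (prefix pi i.+1) - f (prefix pi i).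

Definition Dterm (R : realDomainType) (Omega : finType)
  (f : {set Omega} -> R) (A B : {set Omega}) (s : Omega) : R :=
  f (A :|: B :|: [set s]) - f (A :|: B) - f (A :|: [set s]) + f A.

(* D[f] = max of Dterm over A, B, s with |A| <= |Omega| - 1.  The fold is
   started at 0; this is harmless since the term with B = set0 is 0, so 0 is
   attained whenever Omega is nonempty. *)
Definition Dmax (R : realDomainType) (Omega : finType)
  (f : {set Omega} -> R) : R :=
  \big[Num.max/0]_(p : {set Omega} * {set Omega} * Omega
                    | (#|p.1.1| <= #|Omega|.-1)%N) Dterm f p.1.1 p.1.2 p.2.

Definition increasing (R : realDomainType) (Omega : finType)
  (f : {set Omega} -> R) : Prop :=
  forall A B : {set Omega}, A \subset B -> f A <= f B.

(** Along the chain of prefixes [T_i = {pi_1, ..., pi_i}], the entries of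
    [gamma] are the marginal gains [f (T_i + pi_(i+1)) - f T_i].  The defining
    term of [D[f]] with [A] any subset of [T_i] and [B = T_i] says that adding
    [pi_(i+1)] to [A] gains at least this much minus [D[f]].  Adding the
    elements of [S] one at a time in the order given by [pi] therefore costs
    at most [D[f]] per element compared with [gamma], which gives the bound. *)
From Pilot Require Import Defs.
From HB Require Import structures.
From mathcomp Require Import all_boot all_order all_algebra.
From mathcomp Require Import lra.
Set Implicit Arguments. Unset Strict Implicit. Unset Printing Implicit Defensive.
Import Order.TTheory GRing.Theory Num.Theory.
Local Open Scope ring_scope.

(* [seq.prefix] from [all_boot] shadows [Defs.prefix]. *)
Local Notation prefix := Pilot.Defs.prefix.

Section Prefix.
Variables (Omega : finType) (pi : 'I_#|Omega| -> Omega).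

Lemma prefix0 : prefix pi 0 = set0.
Proof. by apply/setP => x; rewrite inE; apply/imsetP => -[j]; rewrite inE. Qed.

Lemma prefixS (i : 'I_#|Omega|) : prefix pi i.+1 = pi i |: prefix pi i.
Proof.
rewrite /prefix.
have -> : [set j : 'I_#|Omega| | (j < i.+1)%N] = i |: [set j : 'I_#|Omega| | (j < i)%N].
  by apply/setP => j; rewrite !inE ltnS leq_eqVlt -val_eqE.
by rewrite imsetU1.
Qed.

Lemma prefix_full : bijective pi -> prefix pi #|Omega| = setT.
Proof.
case=> g _ gK; apply/setP => x; rewrite inE; apply/imsetP; exists (g x).
  by rewrite inE ltn_ord.
by rewrite gK.
Qed.

Lemma notin_prefix (i : 'I_#|Omega|) : injective pi -> pi i \notin prefix pi i.
Proof. by move=> pi_inj; rewrite mem_imset // inE ltnn. Qed.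

End Prefix.

Section MarginalGain.
Variables (R : realDomainType) (Omega : finType) (f : {set Omega} -> R).

Lemma Dterm_le_Dmax (A B : {set Omega}) (s : Omega) :
  (#|A| <= #|Omega|.-1)%N -> Dterm f A B s <= Dmax f.
Proof. by move=> A_small; apply: (@le_bigmax_cond _ R _ _ (A, B, s)). Qed.

Lemma marginal_gain_ge (A B : {set Omega}) (s : Omega) :
  A \subset B -> s \notin A ->
  f (s |: B) - f B - Dmax f <= f (s |: A) - f A.
Proof.
move=> sAB sNA.
have A_small : (#|A| <= #|Omega|.-1)%N.
  by have := max_card (s |: A); rewrite cardsU1 sNA; case: #|Omega|.
have := Dterm_le_Dmax B s A_small.
rewrite /Dterm (setUidPr sAB) !(setUC _ [set s]).
lra.
Qed.

End MarginalGain.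

Section Chain.
Variables (R : realDomainType) (Omega : finType) (f : {set Omega} -> R).
Variables (gamma : Omega -> R) (pi : 'I_#|Omega| -> Omega).
Hypothesis f0 : f set0 = 0.
Hypothesis pi_inj : injective pi.
Hypothesis gamma_gain :
  forall i : 'I_#|Omega|, gamma (pi i) = f (prefix pi i.+1) - f (prefix pi i).

Definition gain_bounded (A : {set Omega}) : Prop :=
  - (#|A|%:R * Dmax f) + \sum_(s in A) gamma s <= f A.

Lemma gain_bounded_setU1 (i : 'I_#|Omega|) (A : {set Omega}) :
  A \subset prefix pi i -> gain_bounded A -> gain_bounded (pi i |: A).
Proof.
move=> sA boundA.
have piNA : pi i \notin A := contra (subsetP sA _) (notin_prefix i pi_inj).
have := marginal_gain_ge f sA piNA.
rewrite -prefixS -gamma_gain.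
move: boundA; rewrite /gain_bounded cardsU1 piNA big_setU1 //= natrD mulrDl mul1r.
lra.
Qed.

Lemma gain_bounded_sub_prefix (k : nat) (A : {set Omega}) :
  (k <= #|Omega|)%N -> A \subset prefix pi k -> gain_bounded A.
Proof.
elim: k A => [|k IHk] A k_le sA.
  move: sA; rewrite prefix0 subset0 => /eqP ->.
  by rewrite /gain_bounded cards0 big_set0 mul0r oppr0 addr0 f0.
pose i := Ordinal k_le.
have sAD : A :\ pi i \subset prefix pi i by rewrite subDset -prefixS.
have IH : gain_bounded (A :\ pi i) := IHk _ (ltnW k_le) sAD.
have [piA | piNA] := boolP (pi i \in A).
  by rewrite -(setD1K piA); apply: gain_bounded_setU1.
have A_eq : A :\ pi i = A by apply/setDidPl; rewrite disjoint_sym disjoints1.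
by rewrite -A_eq.
Qed.

End Chain.

Theorem mainTheorem18 (R : realFieldType) (Omega : finType)
  (f : {set Omega} -> R) (gamma : Omega -> R) :
  increasing f -> f set0 = 0 -> in_Gamma f gamma ->
  forall S : {set Omega},
    f S >= - (#|S|%:R * Dmax f) + \sum_(s in S) gamma s.
Proof.
move=> _ f0 [pi [pi_bij gamma_gain]] S.
apply: (gain_bounded_sub_prefix f0 (bij_inj pi_bij) gamma_gain (leqnn _)).
by rewrite prefix_full ?subsetT.
Qed.
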